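(* Let $G$ be a finite group. Then $K(G)=G$ if and only if $G$ is abelian or $G$ is quasi-simple.
   Context: For $\chi\in\mathrm{Irr}(G)$, the center of $\chi$ is $Z(\chi)=\{g\in G : |\chi(g)|=\chi(1)\}$. For a nonabelian group $G$, let $\mathcal{X}=\{\chi\in\mathrm{Irr}(G) : Z(\chi)>Z(G)\}$ (strict containment) and define $K(G)=\bigcap_{\chi\in\mathcal{X}}\ker(\chi)$; if $G$ is abelian, set $K(G)=G$. A group $G$ is quasi-simple if $G'=G$ and $G/Z(G)$ is nonabelian simple. *)

From mathcomp Require Import all_boot all_order all_algebra all_fingroup all_solvable all_field all_character.
Set Implicit Arguments. Unset Strict Implicit. Unset Printing Implicit Defensive.
Import GRing.Theory Num.Theory.
Local Open Scope group_scope.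

Definition char_center (gT : finGroupType) (G : {group gT}) (chi : 'CF(G)) : {set gT} :=
  [set g in G | `|chi g| == chi 1%g]%R.

Definition Xset (gT : finGroupType) (G : {group gT}) : {set Iirr G} :=
  [set i : Iirr G | 'Z(G) \proper char_center ('chi[G]_i)%R].

(* K(G) = intersection of kernels of chi in X (intersected with G, so the
   empty intersection is G); K(G) = G when G is abelian. *)
Definition KG (gT : finGroupType) (G : {group gT}) : {set gT} :=
  if abelian G then G
  else G :&: \bigcap_(i in Xset G) cfker ('chi[G]_i)%R.

Definition quasi_simple (gT : finGroupType) (G : {group gT}) : bool :=
  [&& [~: G, G] == G, simple (G / 'Z(G)) & ~~ abelian (G / 'Z(G))].

From mathcomp Require Import all_boot all_order all_algebra all_fingroup all_solvable all_field all_character.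
Set Implicit Arguments. Unset Strict Implicit.
Import GRing.Theory Num.Theory.
Local Open Scope group_scope.
Local Open Scope ring_scope.

(* Since Z(G) is the intersection of the centers of the irreducible characters,
   the condition K(G) = G for nonabelian G says that every nonprincipal
   irreducible character chi has Z(chi) = Z(G). A linear character has
   Z(chi) = G, so this forces G to be perfect; and since every proper normal
   subgroup N lies in the kernel, hence in the center, of some nonprincipal
   irreducible character, every proper normal subgroup is central, which makes
   G/Z(G) simple. Conversely, in a quasi-simple group Z(chi) is normal; it
   cannot be G, as then G/ker(chi) would be cyclic and the perfect group G
   would lie in ker(chi); so it is a proper normal subgroup, and these are
   central in a quasi-simple group. *)

Lemma exists_nonprincipal_irr_cfker (gT : finGroupType) (G N : {group gT}) :
  N <| G -> ~~ (G \subset N) ->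
  exists2 i : Iirr G, (i != 0) & N \subset cfker 'chi_i.
Proof.
move=> nsNG /subsetPn[x Gx notNx].
have nNx : x \in 'N(N) by rewrite (subsetP (normal_norm nsNG)).
have [i notKx] : exists i : Iirr (G / N)%g, coset N x \notin cfker 'chi_i.
  apply/existsP; rewrite -negb_forall; apply/forallP => Kx.
  have : coset N x \in \bigcap_i cfker 'chi[G / N]_i by apply/bigcapP.
  by rewrite TI_cfker_irr inE => /eqP /(coset_idr nNx); apply/negP.
have nz_i : i != 0.
  by apply: contraNneq notKx => ->; rewrite cfker_irr0 mem_quotient.
exists (mod_Iirr i); first by rewrite mod_Iirr_eq0.
by rewrite mod_IirrE // cfker_mod.
Qed.

Lemma center_sub_cfcenter_irr (gT : finGroupType) (G : {group gT}) (i : Iirr G) :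
  'Z(G) \subset 'Z('chi_i)%CF.
Proof. by rewrite -cap_cfcenter_irr; apply: bigcap_inf. Qed.

Lemma mem_Xset (gT : finGroupType) (G : {group gT}) (i : Iirr G) :
  (i \in Xset G) = ~~ ('Z('chi_i)%CF \subset 'Z(G)).
Proof.
have Zchi : char_center 'chi_i = 'Z('chi_i)%CF by rewrite /cfcenter irr_char.
by rewrite inE Zchi properE center_sub_cfcenter_irr.
Qed.

Lemma KG_nonabelianP (gT : finGroupType) (G : {group gT}) :
  ~~ abelian G ->
  KG G = G <-> (forall i : Iirr G, i != 0 -> 'Z('chi_i)%CF \subset 'Z(G)).
Proof.
rewrite /KG => /negbTE->; split=> [KGG i nz_i | centralZ].
  apply: contraR nz_i; rewrite -mem_Xset -subGcfker => Xi.
  have : G \subset G :&: \bigcap_(j in Xset G) cfker 'chi_j by rewrite KGG.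
  by rewrite subsetI => /andP[_ /bigcapsP]; apply.
apply/setIidPl/bigcapsP => i; rewrite mem_Xset subGcfker.
by apply: contraR => /centralZ.
Qed.

Section CentralCharacterCenters.

Variables (gT : finGroupType) (G : {group gT}).
Hypothesis centralZ : forall i : Iirr G, i != 0 -> 'Z('chi_i)%CF \subset 'Z(G).

Lemma proper_normal_central (N : {group gT}) :
  N <| G -> ~~ (G \subset N) -> N \subset 'Z(G).
Proof.
move=> nsNG notGN; have [i nz_i sNK] := exists_nonprincipal_irr_cfker nsNG notGN.
apply: subset_trans sNK (subset_trans _ (centralZ nz_i)).
exact: normal_sub (cfker_center_normal _).
Qed.

Lemma perfect_of_central_cfcenters : ~~ abelian G -> [~: G, G] = G.
Proof.
move=> nabG; apply/eqP; rewrite eqEsubset der1_subG /=.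
apply: contraR nabG => notGG'.
have [i nz_i sG'K] := exists_nonprincipal_irr_cfker (der_normal 1 G) notGG'.
have lin_i : 'chi_i \is a linear_char by rewrite lin_irr_der1.
have sGZ : G \subset 'Z('chi_i)%CF.
  apply/subsetP=> x Gx.
  by rewrite irr_cfcenterE // normC_lin_char // lin_char1.
exact: abelianS (subset_trans sGZ (centralZ nz_i)) (center_abelian G).
Qed.

End CentralCharacterCenters.

Lemma quasi_simple_proper_normal_central (gT : finGroupType) (G N : {group gT}) :
  quasi_simple G -> N <| G -> ~~ (G \subset N) -> N \subset 'Z(G).
Proof.
case/and3P=> /eqP perfectG /simpleP[_ simpleGZ] _ nsNG notGN.
have nsZG := center_normal G.
have nZN : N \subset 'N('Z(G)) := subset_trans (normal_sub nsNG) (normal_norm nsZG).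
have [NZ1 | NZG] := simpleGZ _ (quotient_normal 'Z(G) nsNG).
  by rewrite -quotient_sub1 // NZ1.
have sGNZ : G \subset N <*> 'Z(G).
  rewrite -(quotientSGK (normal_norm nsZG)) ?joing_subr //.
  by rewrite quotientYidr // -NZG.
(* G/N is a quotient of the abelian group Z(G), so N contains G' = G. *)
case/negP: notGN; rewrite -perfectG -derg1 der1_min ?normal_norm //.
apply: abelianS (quotientS N sGNZ) _.
rewrite quotientYidl; last by rewrite (subset_trans (normal_sub nsZG)) ?normal_norm.
exact/quotient_abelian/center_abelian.
Qed.

Lemma perfect_quasi_simple (gT : finGroupType) (G : {group gT}) :
  [~: G, G] = G -> ~~ abelian G ->
  (forall N : {group gT}, N <| G -> ~~ (G \subset N) -> N \subset 'Z(G)) ->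
  quasi_simple G.
Proof.
move=> perfectG nabG centralN; have nsZG := center_normal G.
have nabGZ : ~~ abelian (G / 'Z(G)).
  apply: contra nabG => abGZ; apply: abelianS (center_abelian G).
  by rewrite -{1}perfectG -derg1 der1_min ?normal_norm.
apply/and3P; split=> //; first by rewrite perfectG.
apply/simpleP; split=> [|H nsHGZ].
  by apply: contraNneq nabGZ => ->; apply: abelian1.
have nsNG : coset 'Z(G) @*^-1 H <| G.
  by move: nsHGZ; rewrite -cosetpre_normal quotientGK.
have [sGN | notGN] := boolP (G \subset coset 'Z(G) @*^-1 H).
  right; apply/eqP; rewrite eqEsubset normal_sub //=.
  by rewrite -(cosetpreK H) quotientS.
left; apply/trivgP; rewrite -(cosetpreK H) -(trivg_quotient 'Z(G)).
by rewrite quotientS // centralN.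
Qed.

Lemma quasi_simple_cfcenter_central (gT : finGroupType) (G : {group gT}) (i : Iirr G) :
  quasi_simple G -> i != 0 -> 'Z('chi_i)%CF \subset 'Z(G).
Proof.
move=> qsG nz_i; apply: (quasi_simple_proper_normal_central qsG (cfcenter_normal _)).
apply: contra nz_i => sGZ; rewrite -subGcfker.
have ZG : 'Z('chi_i)%CF = G by apply/eqP; rewrite eqEsubset cfcenter_sub.
have := cfcenter_cyclic 'chi_i; rewrite ZG => /cyclic_abelian abGK.
case/and3P: qsG => /eqP perfectG _ _.
by rewrite -{1}perfectG -derg1 der1_min ?normal_norm ?cfker_normal.
Qed.

Theorem lemma2p2 (gT : finGroupType) (G : {group gT}) :
  KG G = G <-> (abelian G \/ quasi_simple G).
Proof.
have [abG | nabG] := boolP (abelian G).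
  by rewrite /KG abG; split=> [_|//]; left.
apply: iff_trans (KG_nonabelianP nabG) _; split=> [centralZ | [//|qsG]].
  right; apply: perfect_quasi_simple => //.
    exact: perfect_of_central_cfcenters.
  exact: proper_normal_central.
by move=> i; apply: quasi_simple_cfcenter_central.
Qed.
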